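(* Let $d,j$ be integers with $d\ge 3$ and $d\le j\le \left\lfloor \frac{3(d-1)}{2}\right\rfloor$. Let $\lambda_1,\dots,\lambda_t$ be the elements of $\mathscr{P}_{3,d-1}(j)$ and $\mu_1,\dots,\mu_s$ the elements of $\mathscr{P}_{3,d-1}(j-1)$, and define the $s\times t$ matrix $C=(C_{pq})$ by $E([x^{\lambda_q}])=\sum_{p=1}^{s} C_{pq}[x^{\mu_p}]$. Then $\operatorname{rank} C = s = p_{3,d-1}(j-1)$.
   Context: $\Bbbk$ is an algebraically closed field of characteristic $0$. For an integer $d\ge 1$, $A(d)=\Bbbk[x_1,x_2,x_3]/(x_1^d,x_2^d,x_3^d)=\bigoplus_j A(d)_j$ with its standard grading; the monomials $x_1^{a_1}x_2^{a_2}x_3^{a_3}$ with $0\le a_i\le d-1$ form a basis. The linear map $E:A(d)_{j+1}\to A(d)_j$ is defined on monomials by $E(x_1^{a_1}x_2^{a_2}x_3^{a_3})=\sum_{k=1}^{3} a_k(d-a_k)\,x_1^{a_1}\cdots x_k^{a_k-1}\cdots x_3^{a_3}$ (terms with $a_k=0$ vanish). For integers $l\ge 0$ and $n$, $\mathscr{P}_{3,l}(n)$ is the set of integer triples $(a,b,c)$ with $l\ge a\ge b\ge c\ge 0$, $a+b+c=n$, and $p_{3,l}(n)=|\mathscr{P}_{3,l}(n)|$. For $\lambda=(a,b,c)$, $[x^\lambda]$ denotes the sum of the distinct monomials in the orbit of $x_1^ax_2^bx_3^c$ under the action of $S_3$ permuting the variables. *)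

From HB Require Import structures.
From mathcomp Require Import all_boot all_order all_algebra all_fingroup.
Set Implicit Arguments. Unset Strict Implicit. Unset Printing Implicit Defensive.
Import GRing.Theory.
Local Open Scope ring_scope.

(* Monomials x1^a1 x2^a2 x3^a3 of A(d) = k[x1,x2,x3]/(x1^d,x2^d,x3^d), 0 <= a_i <= d-1,
   encoded by their exponent vectors. *)
Notation mono d := {ffun 'I_3 -> 'I_d}.

(* An element of A(d) is a K-linear combination of the monomial basis:
   a function giving the coefficient of each basis monomial. *)
Notation Aelt K d := {ffun mono d -> K}.

Definition tr3 (l : nat * nat * nat) (i : 'I_3) : nat :=
  let: (a, b, c) := l in
  match val i with 0 => a | 1 => b | _ => c end.

(* [x^lambda] : sum of the distinct monomials in the S_3-orbit of x1^a x2^b x3^c,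
   i.e. the indicator of the orbit set. *)
Definition orbsum (K : fieldType) (d : nat) (l : nat * nat * nat) : Aelt K d :=
  [ffun m : mono d =>
     if [exists s : 'S_3, [forall i : 'I_3, val (m i) == tr3 l (s i)]] then 1 else 0].

(* E applied to a single monomial m:
   E(m) = sum_k a_k (d - a_k) * (m with a_k replaced by a_k - 1), terms with a_k = 0 vanish. *)
Definition Emono (K : fieldType) (d : nat) (m : mono d) : Aelt K d :=
  [ffun m' : mono d =>
     \sum_(k : 'I_3)
       if (0 < val (m k))%N &&
          [forall i : 'I_3, val (m' i) == (if i == k then (val (m k)).-1 else val (m i))]
       then ((val (m k)) * (d - val (m k)))%:R else 0].

Definition Emap (K : fieldType) (d : nat) (f : Aelt K d) : Aelt K d :=
  [ffun m' : mono d => \sum_(m : mono d) f m * @Emono K d m m'].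

(* P_{3,l}(n): triples (a,b,c) with l >= a >= b >= c >= 0 and a+b+c = n (as a duplicate-free list). *)
Definition P3 (l n : nat) : seq (nat * nat * nat) :=
  [seq x <- flatten [seq [seq (ab.1, ab.2, c) | c <- iota 0 l.+1]
                         | ab <- [seq (a, b) | a <- iota 0 l.+1, b <- iota 0 l.+1]]
     | let: (a, b, c) := x in [&& (b <= a)%N, (c <= b)%N & (a + b + c == n)%N]].

Definition p3 (l n : nat) : nat := size (P3 l n).

From HB Require Import structures.
From mathcomp Require Import all_boot all_order all_algebra all_fingroup.
From mathcomp Require Import zify ring.
Set Implicit Arguments. Unset Strict Implicit. Unset Printing Implicit Defensive.
Import GRing.Theory.
Local Open Scope ring_scope.

(* [C] is the matrix of [E], restricted to S_3-invariants, from degree [j] to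
   degree [j - 1] in the orbit-sum bases, so its rank is [s] iff this
   restriction is onto.  Let [L] be multiplication by [x1 + x2 + x3].  Then
   [E L - L E] acts on degree [n] as the scalar [3(d-1) - 2n], and iterating
   gives [E L^(p+1) g = L^(p+1) E g + S L^p g] for [g] of degree [r], where [S]
   is a sum of the integers [3(d-1) - 2(r+i)], [i <= p], all positive when
   [2(r+p) < 3(d-1)], hence [S != 0] in characteristic 0.  Since [E g] has
   lower degree, induction on [r] writes every [L^p g] with [g] symmetric as
   [E] of a symmetric element; [p = 0] is the required surjectivity, and the
   bound on [j] is exactly [2(j-1) < 3(d-1)]. *)

Section RaisingLowering.
Variables (K : fieldType) (d : nat).
Implicit Types (f g z : Aelt K d) (m : mono d).

(* An exponent [d - 1] is left unchanged; that junk value only ever meets the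
   factor [Ecoef d = 0]. *)
Definition incr_exp (k : 'I_3) m : mono d :=
  [ffun i => if i == k then insubd (m i) (m i).+1 else m i].

Definition decr_exp (k : 'I_3) m : mono d :=
  [ffun i => if i == k then insubd (m i) (m i).-1 else m i].

Definition mdeg m : nat := (\sum_i (m i : nat))%N.

Definition Ecoef (a : nat) : K := (a * (d - a))%:R.

(* [Lmap f] is the product [(x1 + x2 + x3) f] in [A(d)]. *)
Definition Lmap f : Aelt K d :=
  [ffun m : mono d => \sum_(k : 'I_3) if (0 < m k)%N then f (decr_exp k m) else 0].

Lemma val_incr_exp k m i : val (incr_exp k m i) =
  if i == k then if ((m i).+1 < d)%N then (m i).+1 else m i else m i.
Proof. by rewrite ffunE; case: (i == k); rewrite ?val_insubd. Qed.

Lemma val_decr_exp k m i :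
  val (decr_exp k m i) = if i == k then (m i).-1 else m i.
Proof.
rewrite ffunE; case: (i == k) => //.
by rewrite val_insubd (leq_ltn_trans (leq_pred _) (ltn_ord _)).
Qed.

Lemma decr_incr_exp_comm k l m :
  k != l -> decr_exp l (incr_exp k m) = incr_exp k (decr_exp l m).
Proof.
move=> neq_kl; apply/ffunP => i; apply: val_inj.
rewrite !(val_incr_exp, val_decr_exp).
case: (i =P k) => [eq_ik|_]; case: (i =P l) => [eq_il|_] //.
by case/eqP: neq_kl; rewrite -eq_ik -eq_il.
Qed.

Lemma incr_expK k m : ((m k).+1 < d)%N -> decr_exp k (incr_exp k m) = m.
Proof.
move=> lt_mk; apply/ffunP => i; apply: val_inj.
by rewrite val_decr_exp val_incr_exp; case: (i =P k) => [->|]; rewrite ?eqxx ?lt_mk.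
Qed.

Lemma decr_expK k m : (0 < m k)%N -> incr_exp k (decr_exp k m) = m.
Proof.
move=> mk_gt0; apply/ffunP => i; apply: val_inj.
rewrite val_incr_exp !val_decr_exp; case: (i =P k) => [->|] //.
by rewrite prednK ?ltn_ord.
Qed.

Lemma mdeg_incr_exp k m : ((m k).+1 < d)%N -> mdeg (incr_exp k m) = (mdeg m).+1.
Proof.
move=> lt_mk; rewrite /mdeg (bigD1 k) //= [in RHS](bigD1 k) //= val_incr_exp eqxx lt_mk.
by congr (_ + _)%N; apply: eq_bigr => i /negbTE neq_ik; rewrite val_incr_exp neq_ik.
Qed.

Lemma mdeg_decr_exp k m : (0 < m k)%N -> (mdeg (decr_exp k m)).+1 = mdeg m.
Proof.
move=> mk_gt0; rewrite /mdeg (bigD1 k) //= [in RHS](bigD1 k) //= val_decr_exp eqxx.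
rewrite -addSn prednK //; congr (_ + _)%N.
by apply: eq_bigr => i /negbTE neq_ik; rewrite val_decr_exp neq_ik.
Qed.

Lemma Ecoef_ge a : (d <= a)%N -> Ecoef a = 0.
Proof. by rewrite /Ecoef -subn_eq0 => /eqP ->; rewrite muln0. Qed.

Lemma Ecoef_succB a : (a < d)%N -> Ecoef a.+1 - Ecoef a = (d - 1)%:R - (2 * a)%:R.
Proof.
move=> lt_ad; have Enat : (a.+1 * (d - a.+1) + 2 * a = (d - 1) + a * (d - a))%N by nia.
apply: (addIr (2 * a)%:R); rewrite subrK addrAC -natrD Enat natrD.
by rewrite /Ecoef addrK.
Qed.

Lemma Emono_support m m' k :
  (0 < val (m k))%N &&
  [forall i, val (m' i) == (if i == k then (val (m k)).-1 else val (m i))]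
  = ((m' k).+1 < d)%N && (m == incr_exp k m').
Proof.
apply/andP/andP => [[mk_gt0 /forallP Em'] | [lt_m'k /eqP ->]].
- have /eqP Em'k := Em' k; rewrite eqxx in Em'k.
  have lt_m'k : ((m' k).+1 < d)%N by rewrite Em'k prednK ?ltn_ord.
  split => //; apply/eqP/ffunP => i; apply: val_inj; rewrite val_incr_exp.
  case: (i =P k) => [->|/eqP neq_ik]; first by rewrite lt_m'k Em'k prednK.
  by have /eqP -> := Em' i; rewrite (negbTE neq_ik).
- rewrite val_incr_exp eqxx lt_m'k; split => //; apply/forallP => i.
  by rewrite !val_incr_exp; case: (i =P k) => [->|].
Qed.

Lemma EmapE f m : Emap f m = \sum_k f (incr_exp k m) * Ecoef (m k).+1.
Proof.
rewrite ffunE; under eq_bigr => m' _ do rewrite ffunE big_distrr.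
rewrite exchange_big; apply: eq_bigr => k _ /=.
under eq_bigr => m' _ do rewrite Emono_support.
rewrite (bigD1 (incr_exp k m)) //= eqxx andbT big1 ?addr0 => [|m' /negbTE->];
  last by rewrite andbF mulr0.
by rewrite val_incr_exp eqxx; case: ltnP => // ge_mk; rewrite Ecoef_ge ?mulr0.
Qed.

(* [E L - L E] acts on degree [n] as the scalar [hweight n]. *)
Definition hweight (n : nat) : K := (3 * (d - 1))%N%:R - (2 * n)%N%:R.

Lemma Emap_Lmap f m : Emap (Lmap f) m = Lmap (Emap f) m + hweight (mdeg m) * f m.
Proof.
pose T1 k l := (if (0 < incr_exp k m l)%N then f (decr_exp l (incr_exp k m)) else 0)
  * Ecoef (m k).+1.
pose T2 k l := if (0 < m l)%N then f (incr_exp k (decr_exp l m)) * Ecoef (decr_exp l m k).+1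
  else 0.
have -> : Emap (Lmap f) m = \sum_k \sum_l T1 k l.
  by rewrite EmapE; apply: eq_bigr => k _; rewrite ffunE mulr_suml.
have -> : Lmap (Emap f) m = \sum_k \sum_l T2 k l.
  rewrite ffunE exchange_big; apply: eq_bigr => l _ /=.
  by rewrite /T2; case: (boolP (0 < m l)%N) => _; rewrite ?EmapE ?big1_eq.
have offdiag k l : k != l -> T1 k l = T2 k l.
  move=> neq_kl; rewrite /T1 /T2 decr_incr_exp_comm // val_incr_exp val_decr_exp.
  by rewrite eq_sym (negbTE neq_kl); case: ifP; rewrite ?mul0r.
have diag k : T1 k k - T2 k k = ((d - 1)%:R - (2 * m k)%:R) * f m.
  have T1E : T1 k k = f m * Ecoef (m k).+1.
    rewrite /T1 val_incr_exp eqxx; case: (ltnP (m k).+1 d) => [lt_mk|ge_mk] /=.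
      by rewrite incr_expK.
    by rewrite Ecoef_ge ?mulr0.
  have T2E : T2 k k = f m * Ecoef (m k).
    rewrite /T2 val_decr_exp eqxx; case: posnP => [->|mk_gt0]; first by rewrite /Ecoef mulr0.
    by rewrite prednK // decr_expK.
  by rewrite T1E T2E -mulrBr Ecoef_succB // mulrC.
apply/eqP; rewrite addrC -subr_eq -sumrB.
rewrite (eq_bigr (fun k => ((d - 1)%:R - (2 * m k)%:R) * f m)) => [|k _]; last first.
  rewrite -sumrB (bigD1 k) //= diag big1 ?addr0 // => l neq_lk.
  by rewrite offdiag 1?eq_sym // subrr.
rewrite -mulr_suml /hweight /mdeg !big_ord_recl !big_ord0 !addr0 addn0.
by apply/eqP; congr (_ * _); rewrite !natrM !natrD; ring.
Qed.

Definition homog f (n : nat) := forall m, mdeg m != n -> f m = 0.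

Definition sym_elt f := forall (s : 'S_3) m, f [ffun i => m (s i)] = f m.

Definition lincomb (a : K) f (b : K) g : Aelt K d := [ffun m => a * f m + b * g m].

Lemma Emap_lincomb a f b g : Emap (lincomb a f b g) = lincomb a (Emap f) b (Emap g).
Proof.
apply/ffunP => m; rewrite EmapE [RHS]ffunE !EmapE !mulr_sumr -big_split.
by apply: eq_bigr => k _; rewrite ffunE mulrDl !mulrA.
Qed.

Lemma Lmap_lincomb a f b g : Lmap (lincomb a f b g) = lincomb a (Lmap f) b (Lmap g).
Proof.
apply/ffunP => m; rewrite !ffunE !mulr_sumr -big_split; apply: eq_bigr => k _ /=.
by case: ifP; rewrite ?ffunE ?mulr0 ?addr0.
Qed.

Lemma homog_lincomb a f b g n : homog f n -> homog g n -> homog (lincomb a f b g) n.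
Proof. by move=> hf hg m neq_mn; rewrite ffunE hf ?hg // !mulr0 addr0. Qed.

Lemma sym_lincomb a f b g : sym_elt f -> sym_elt g -> sym_elt (lincomb a f b g).
Proof. by move=> sf sg s m; rewrite !ffunE sf sg. Qed.

Lemma Emap_homog_eq0 f n m : homog f n -> (mdeg m).+1 != n -> Emap f m = 0.
Proof.
move=> hf neq_mn; rewrite EmapE big1 // => k _.
case: (ltnP (m k).+1 d) => [lt_mk|ge_mk]; last by rewrite Ecoef_ge ?mulr0.
by rewrite hf ?mul0r // mdeg_incr_exp.
Qed.

Lemma homog_Emap f n : homog f n.+1 -> homog (Emap f) n.
Proof. by move=> hf m neq_mn; apply: Emap_homog_eq0 hf _; rewrite eqSS. Qed.

Lemma Emap_homog0 f : homog f 0 -> Emap f = 0.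
Proof. by move=> hf; apply/ffunP => m; rewrite [RHS]ffunE (Emap_homog_eq0 hf). Qed.

Lemma homog_Lmap f n : homog f n -> homog (Lmap f) n.+1.
Proof.
move=> hf m neq_mn; rewrite ffunE big1 // => k _; case: ifP => // mk_gt0.
by apply: hf; apply: contra neq_mn => /eqP <-; rewrite mdeg_decr_exp.
Qed.

Lemma homog_iterL f n p : homog f n -> homog (iter p Lmap f) (n + p).
Proof.
by move=> hf; elim: p => [|p IH]; rewrite ?addn0 // addnS; apply: homog_Lmap.
Qed.

Lemma iter_Lmap0 p : iter p Lmap 0 = 0.
Proof.
elim: p => //= p ->; apply/ffunP => m; rewrite !ffunE big1 // => k _.
by rewrite ffunE; case: ifP.
Qed.

Lemma incr_exp_perm (s : 'S_3) k m :
  incr_exp k [ffun i => m (s i)] = [ffun i => incr_exp (s k) m (s i)].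
Proof. by apply/ffunP => i; rewrite !ffunE (inj_eq perm_inj). Qed.

Lemma decr_exp_perm (s : 'S_3) k m :
  decr_exp k [ffun i => m (s i)] = [ffun i => decr_exp (s k) m (s i)].
Proof. by apply/ffunP => i; rewrite !ffunE (inj_eq perm_inj). Qed.

Lemma sym_Emap f : sym_elt f -> sym_elt (Emap f).
Proof.
move=> sf s m; rewrite !EmapE [in RHS](reindex_inj (@perm_inj _ s)) /=.
by apply: eq_bigr => k _; rewrite !ffunE incr_exp_perm sf.
Qed.

Lemma sym_Lmap f : sym_elt f -> sym_elt (Lmap f).
Proof.
move=> sf s m; rewrite !ffunE [in RHS](reindex_inj (@perm_inj _ s)) /=.
by apply: eq_bigr => k _; rewrite !ffunE decr_exp_perm sf.
Qed.

Lemma sym_iterL f p : sym_elt f -> sym_elt (iter p Lmap f).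
Proof. by move=> sf; elim: p => //= p; apply: sym_Lmap. Qed.

Lemma Emap_Lmap_homog f n m :
  homog f n -> Emap (Lmap f) m = Lmap (Emap f) m + hweight n * f m.
Proof.
move=> hf; rewrite Emap_Lmap; case: (eqVneq (mdeg m) n) => [-> // | neq_mn].
by rewrite hf ?mulr0.
Qed.

Definition hweight_sum r p : K := \sum_(i < p.+1) hweight (r + i).

Lemma Emap_iterL g r p m : homog g r ->
  Emap (iter p.+1 Lmap g) m = iter p.+1 Lmap (Emap g) m + hweight_sum r p * iter p Lmap g m.
Proof.
move=> hg; elim: p m => [|p IH] m.
  by rewrite /= (Emap_Lmap_homog _ hg) /hweight_sum big_ord1 addn0.
rewrite [iter p.+2 _ _]/= (Emap_Lmap_homog _ (homog_iterL (p := p.+1) hg)).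
have -> : Emap (iter p.+1 Lmap g) =
    lincomb 1 (iter p.+1 Lmap (Emap g)) (hweight_sum r p) (iter p Lmap g).
  by apply/ffunP => y; rewrite [in RHS]ffunE IH mul1r.
rewrite Lmap_lincomb ffunE mul1r -addrA -mulrDl /hweight_sum [in RHS]big_ord_recr.
by rewrite addnS.
Qed.

Definition Emap_sym_surjective n := forall g, homog g n -> sym_elt g ->
  exists z, [/\ homog z n.+1, sym_elt z & Emap z = g].

Section CharZero.
Hypothesis charK : [pchar K] =i pred0.

Lemma hweight_sum_neq0 r p : (2 * (r + p) < 3 * (d - 1))%N -> hweight_sum r p != 0.
Proof.
move=> lt_rp.
have -> : hweight_sum r p = (\sum_(i < p.+1) (3 * (d - 1) - 2 * (r + i)))%N%:R.
  rewrite natr_sum; apply: eq_bigr => i _; rewrite /hweight natrB //.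
  by have := ltn_ord i; lia.
rewrite ((pcharf0P K).1 charK) big_ord_recl addn_eq0 negb_and.
by apply/orP; left; rewrite -lt0n subn_gt0 /=; lia.
Qed.

Lemma Emap_preimage_step r p g z' : (2 * (r + p) < 3 * (d - 1))%N ->
  homog g r -> sym_elt g -> homog z' (r + p).+1 -> sym_elt z' ->
  Emap z' = iter p.+1 Lmap (Emap g) ->
  exists z, [/\ homog z (r + p).+1, sym_elt z & Emap z = iter p Lmap g].
Proof.
move=> lt_rp hg sg hz' sz' Ez'; have S_neq0 := hweight_sum_neq0 lt_rp.
(* By [Emap_iterL], [L^p g = E (S^-1 (L^(p+1) g - z'))] with [S = hweight_sum r p]. *)
exists (lincomb (hweight_sum r p)^-1 (iter p.+1 Lmap g) (- (hweight_sum r p)^-1) z').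
split.
- by apply: homog_lincomb hz'; rewrite -addnS; apply: homog_iterL.
- by apply: sym_lincomb sz'; apply: sym_iterL.
- apply/ffunP => m; rewrite Emap_lincomb ffunE (Emap_iterL _ _ hg) Ez'.
  by rewrite mulrDr mulrA mulVf //; ring.
Qed.

Lemma iterL_in_Emap_sym_image r p g : (2 * (r + p) < 3 * (d - 1))%N ->
  homog g r -> sym_elt g ->
  exists z, [/\ homog z (r + p).+1, sym_elt z & Emap z = iter p Lmap g].
Proof.
elim: r p g => [|r IH] p g lt_rp hg sg.
  have hom0 : homog 0 (0 + p).+1 by move=> m _; rewrite ffunE.
  apply: (Emap_preimage_step lt_rp hg sg hom0) => [s m|]; first by rewrite !ffunE.
  by rewrite !Emap_homog0 ?iter_Lmap0 // => m _; rewrite ffunE.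
have lt_rp' : (2 * (r + p.+1) < 3 * (d - 1))%N by rewrite -addSnnS.
have [z' [hz' sz' Ez']] := IH p.+1 _ lt_rp' (homog_Emap hg) (sym_Emap sg).
by rewrite -addSnnS in hz'; apply: Emap_preimage_step hz' sz' Ez'.
Qed.

Lemma Emap_sym_onto n : (2 * n < 3 * (d - 1))%N -> Emap_sym_surjective n.
Proof. by move=> lt_n g; have := @iterL_in_Emap_sym_image n 0 g; rewrite addn0; apply. Qed.

End CharZero.
End RaisingLowering.

Definition tuple3 (l : nat * nat * nat) : 3.-tuple nat := [tuple l.1.1; l.1.2; l.2].

Definition nonincr3 (l : nat * nat * nat) := (l.1.2 <= l.1.1)%N && (l.2 <= l.1.2)%N.

Lemma tr3E l i : tr3 l i = tnth (tuple3 l) i.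
Proof. by case: l => [[a b] c]; case: i => [[|[|[|]]] ?]. Qed.

Lemma tuple3_inj l l' :
  nonincr3 l -> nonincr3 l' -> perm_eq (tuple3 l) (tuple3 l') -> l = l'.
Proof.
have geq_trans : transitive geq by move=> y x z /= le_yx le_zy; apply: leq_trans le_zy le_yx.
have geq_anti : antisymmetric geq by move=> x y /andP [le_yx le_xy]; apply/anti_leq/andP.
case: l l' => [[a b] c] [[a' b'] c'] /andP [le_ba le_cb] /andP [le_ba' le_cb'].
move=> /(sorted_eq geq_trans geq_anti); rewrite /= le_ba le_cb le_ba' le_cb'.
by move=> /(_ isT isT) [-> -> ->].
Qed.

Lemma mem_P3 l n x : (x \in P3 l n) = [&& (x.1.1 <= l)%N, (x.1.2 <= l)%N, (x.2 <= l)%N,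
  nonincr3 x & (x.1.1 + x.1.2 + x.2 == n)%N].
Proof.
case: x => [[a b] c] /=; rewrite /P3 mem_filter.
apply/andP/idP => [[/and3P [le_ba le_cb sum_n]] |
                   /and5P [le_al le_bl le_cl /andP [le_ba le_cb] sum_n]].
- case/allpairsP => [[[a' b'] c']
    [/allpairsP [[a'' b''] [ha hb /= [Ea Eb]]] hc /= [Ea' Eb' Ec]]].
  have hc' : c \in iota 0 l.+1 by rewrite Ec; exact: hc.
  move: ha hb hc'; rewrite -Ea -Eb -Ea' -Eb' !mem_iota !add0n !ltnS /nonincr3 /=.
  by rewrite le_ba le_cb sum_n => -> -> ->.
- rewrite le_ba le_cb sum_n; split => //.
  apply/allpairsP; exists ((a, b), c); rewrite mem_iota ltnS le_cl; split => //.
  by apply/allpairsP; exists (a, b); rewrite !mem_iota !ltnS le_al le_bl.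
Qed.

Lemma uniq_P3 l n : uniq (P3 l n).
Proof.
rewrite /P3 filter_uniq // allpairs_uniq ?iota_uniq //.
- by rewrite allpairs_uniq ?iota_uniq // => [[? ?] [? ?]] _ _ [-> ->].
- by move=> [[? ?] ?] [[? ?] ?] _ _ /= [-> -> ->].
Qed.

Lemma P3_nonincr l n x : x \in P3 l n -> nonincr3 x.
Proof. by rewrite mem_P3 => /and5P []. Qed.

Lemma P3_sum l n x : x \in P3 l n -> (x.1.1 + x.1.2 + x.2 = n)%N.
Proof. by rewrite mem_P3 => /and5P [_ _ _ _ /eqP]. Qed.

Section OrbitSums.
Variables (K : fieldType) (d : nat) (x0 : 'I_d).
Implicit Types (f : Aelt K d) (m : mono d).

Let d_gt0 : (0 < d)%N := leq_ltn_trans (leq0n x0) (ltn_ord x0).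

Definition exps m : 3.-tuple nat := [tuple (m i : nat) | i < 3].

(* The monomial [x^l]; the default [x0] is never used for [l] in [P3 (d - 1) n]. *)
Definition mono_of (l : nat * nat * nat) : mono d := [ffun i => insubd x0 (tr3 l i)].

Lemma orbsumE l m : orbsum K d l m = if perm_eq (exps m) (tuple3 l) then 1 else 0.
Proof.
rewrite ffunE; congr (if _ then _ else _).
apply/existsP/tuple_permP => [[s /forallP Em] | [s /val_inj Em]]; exists s.
  apply: (congr1 val); apply: eq_from_tnth => i.
  by rewrite !tnth_mktuple -tr3E; exact/eqP/Em.
apply/forallP => i.
by have := congr1 (fun u => tnth u i) Em; rewrite !tnth_mktuple -tr3E => <-.
Qed.

Lemma mdeg_exps m : mdeg m = sumn (exps m).
Proof. by rewrite /mdeg sumnE big_map big_enum. Qed.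

Lemma exps_permute (s : 'S_3) m : perm_eq (exps [ffun i => m (s i)]) (exps m).
Proof.
apply/tuple_permP; exists s; apply: (congr1 val); apply: eq_from_tnth => i.
by rewrite !tnth_mktuple ffunE.
Qed.

Lemma sym_orbsum l : sym_elt (orbsum K d l).
Proof. by move=> s m; rewrite !orbsumE (permPl (exps_permute s m)). Qed.

Lemma homog_orbsum b n l : l \in P3 b n -> homog (orbsum K d l) n.
Proof.
move=> /P3_sum sum_l m; rewrite orbsumE mdeg_exps; case: ifP => // /perm_sumn ->.
by case: l sum_l => [[a a'] c] /= <-; rewrite addn0 addnA eqxx.
Qed.

Lemma exps_mono_of n l : l \in P3 (d - 1) n -> exps (mono_of l) = tuple3 l.
Proof.
move=> mem_l; apply: eq_from_tnth => i; rewrite tnth_mktuple ffunE -tr3E val_insubd.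
suff -> : (tr3 l i < d)%N by [].
move: mem_l d_gt0; rewrite mem_P3 => /and5P [].
by case: l => [[a b] c] /=; case: i => [[|[|[|]]] ?] //= *; lia.
Qed.

Lemma orbsum_mono_of l l' n n' : l \in P3 (d - 1) n -> l' \in P3 (d - 1) n' ->
  orbsum K d l (mono_of l') = (l' == l)%:R.
Proof.
move=> mem_l mem_l'; rewrite orbsumE (exps_mono_of mem_l').
case: (eqVneq l' l) => [-> | neq_l'l]; first by rewrite perm_refl.
case: ifP => // /(tuple3_inj (P3_nonincr mem_l') (P3_nonincr mem_l)) eq_l'l.
by rewrite eq_l'l eqxx in neq_l'l.
Qed.

Lemma sym_elt_perm f m m' : sym_elt f -> perm_eq (exps m) (exps m') -> f m = f m'.
Proof.
move=> sf /tuple_permP [s Em]; suff -> : m = [ffun i => m' (s i)] by [].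
apply/ffunP => i; apply: val_inj; rewrite ffunE.
by have := congr1 (fun u : seq nat => nth 0%N u i) Em; rewrite -!tnth_nth !tnth_mktuple.
Qed.

Lemma exps_sorted_P3 m : exists2 l, l \in P3 (d - 1) (mdeg m) & perm_eq (exps m) (tuple3 l).
Proof.
have geq_total : total geq by move=> x y; apply: leq_total.
have := perm_sort geq (exps m); have := sort_sorted geq_total (exps m).
have := size_sort geq (exps m); rewrite size_tuple.
case: (sort geq (exps m)) => [|a [|b [|c []]]] // _ /= /and3P [le_ba le_cb _] /permEl perm_m.
exists (a, b, c); last by rewrite perm_sym.
have le_d1 x : x \in [:: a; b; c] -> (x <= d - 1)%N.
  by rewrite (perm_mem perm_m) => /mapP [i _ ->]; have := ltn_ord (m i); lia.
rewrite mem_P3 /nonincr3 /= le_ba le_cb !le_d1 ?inE ?eqxx ?orbT //=.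
by rewrite mdeg_exps -(perm_sumn perm_m) /= addn0 addnA.
Qed.

Lemma sym_homog_decomp f n L : sym_elt f -> homog f n -> perm_eq L (P3 (d - 1) n) ->
  forall m, f m = \sum_(p < size L)
    f (mono_of (nth (0, 0, 0)%N L p)) * orbsum K d (nth (0, 0, 0)%N L p) m.
Proof.
move=> sf hf perm_L m; pose F l := f (mono_of l) * orbsum K d l m.
rewrite -(big_mkord xpredT (fun p => F (nth (0, 0, 0)%N L p))).
rewrite -(big_nth (0, 0, 0)%N xpredT F) (perm_big _ perm_L) {}/F.
have [deg_m | neq_mn] := eqVneq (mdeg m) n; last first.
  by rewrite hf // big1_seq // => l /andP [_ /homog_orbsum ->]; rewrite ?mulr0.
have [l mem_l perm_ml] := exps_sorted_P3 m; rewrite deg_m in mem_l.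
rewrite (bigD1_seq l) ?uniq_P3 //= big1_seq ?addr0 => [|l' /andP [neq_l'l mem_l']].
  rewrite orbsumE perm_ml mulr1; apply: sym_elt_perm sf _.
  by rewrite (exps_mono_of mem_l).
rewrite orbsumE; case: ifP => [perm_ml'|]; rewrite ?mulr0 //.
case/eqP: neq_l'l; apply: tuple3_inj (P3_nonincr mem_l') (P3_nonincr mem_l) _.
by rewrite -(permPl perm_ml').
Qed.

End OrbitSums.

Lemma row_free_delta_preimages (F : fieldType) m n (A : 'M[F]_(m, n)) :
  (forall i, exists v : 'cV_n, A *m v = delta_mx i 0) -> row_free A.
Proof.
move=> /fin_all_exists [v Av]; apply/row_freeP.
exists (\matrix_(j, i) v i j 0); apply/matrixP => i i'.
have := congr1 (fun M : 'cV[F]_m => M i 0) (Av i'); rewrite !mxE eqxx andbT => <-.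
by apply: eq_bigr => j _; rewrite mxE.
Qed.

Section OrbitSumMatrix.
Variables (K : fieldType) (d n : nat) (x0 : 'I_d) (lam mu : seq (nat * nat * nat)).
Hypotheses (perm_lam : perm_eq lam (P3 (d - 1) n.+1)) (perm_mu : perm_eq mu (P3 (d - 1) n)).

Local Notation lam_ q := (nth (0, 0, 0)%N lam q).
Local Notation mu_ p := (nth (0, 0, 0)%N mu p).

Definition orbsum_expansion (C : 'M[K]_(size mu, size lam)) :=
  forall (q : 'I_(size lam)) (m : mono d),
    Emap (orbsum K d (lam_ q)) m = \sum_(p < size mu) C p q * orbsum K d (mu_ p) m.

Lemma mem_lam (q : 'I_(size lam)) : lam_ q \in P3 (d - 1) n.+1.
Proof. by rewrite -(perm_mem perm_lam) mem_nth. Qed.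

Lemma mem_mu (p : 'I_(size mu)) : mu_ p \in P3 (d - 1) n.
Proof. by rewrite -(perm_mem perm_mu) mem_nth. Qed.

Lemma orbsum_mu_mono_of (p p' : 'I_(size mu)) :
  orbsum K d (mu_ p) (mono_of x0 (mu_ p')) = (p' == p)%:R.
Proof.
rewrite (orbsum_mono_of K x0 (mem_mu p) (mem_mu p')) nth_uniq //.
by rewrite (perm_uniq perm_mu) uniq_P3.
Qed.

Lemma exists_orbsum_expansion : exists C, orbsum_expansion C.
Proof.
exists (\matrix_(p, q) Emap (orbsum K d (lam_ q)) (mono_of x0 (mu_ p))) => q m.
rewrite (sym_homog_decomp x0 _ _ perm_mu).
- by apply: eq_bigr => p _; rewrite mxE.
- exact/sym_Emap/sym_orbsum.
- exact/homog_Emap/homog_orbsum/mem_lam.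
Qed.

Lemma orbsum_expansion_coef C : orbsum_expansion C ->
  forall p q, C p q = Emap (orbsum K d (lam_ q)) (mono_of x0 (mu_ p)).
Proof.
move=> expC p q; rewrite expC (bigD1 p) //= orbsum_mu_mono_of eqxx mulr1.
rewrite big1 ?addr0 // => p' neq_p'p.
by rewrite orbsum_mu_mono_of eq_sym (negbTE neq_p'p) mulr0.
Qed.

Lemma Emap_sym_homog_decomp z : sym_elt z -> homog z n.+1 -> forall m,
  Emap z m = \sum_(q < size lam) z (mono_of x0 (lam_ q)) * Emap (orbsum K d (lam_ q)) m.
Proof.
move=> sz hz m; rewrite ffunE.
under eq_bigr => m' _ do rewrite (sym_homog_decomp x0 sz hz perm_lam m') mulr_suml.
rewrite exchange_big /=; apply: eq_bigr => q _.
by rewrite ffunE mulr_sumr; apply: eq_bigr => m' _; rewrite mulrA.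
Qed.

Lemma orbsum_expansion_rank C :
  Emap_sym_surjective K d n -> orbsum_expansion C -> \rank C = size mu.
Proof.
move=> Emap_onto expC; apply/eqP/row_free_delta_preimages => p.
have [z [hz sz Ez]] := Emap_onto _ (homog_orbsum K (mem_mu p)) (sym_orbsum K (mu_ p)).
exists (\col_q z (mono_of x0 (lam_ q))); apply/matrixP => p' i.
rewrite (ord1 i) !mxE eqxx andbT -orbsum_mu_mono_of -Ez (Emap_sym_homog_decomp sz hz).
by apply: eq_bigr => q _; rewrite !mxE (orbsum_expansion_coef expC) mulrC.
Qed.

End OrbitSumMatrix.

Theorem lemma3p3 (K : closedFieldType) (hchar : [pchar K] =i pred0)
  (d j : nat) (hd : (3 <= d)%N) (hdj : (d <= j)%N) (hj : (j <= (3 * (d - 1))./2)%N)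
  (lam mu : seq (nat * nat * nat))
  (hlam : perm_eq lam (P3 (d - 1) j)) (hmu : perm_eq mu (P3 (d - 1) (j - 1))) :
  let t := size lam in
  let s := size mu in
  let expansion (C : 'M[K]_(s, t)) :=
    forall (q : 'I_t) (m : mono d),
      Emap (orbsum K d (nth (0, 0, 0)%N lam q)) m =
      \sum_(p < s) C p q * orbsum K d (nth (0, 0, 0)%N mu p) m in
  (exists C : 'M[K]_(s, t), expansion C) /\
  (forall C : 'M[K]_(s, t), expansion C -> \rank C = s /\ s = p3 (d - 1) (j - 1)).
Proof.
move=> t s expansion.
have d_gt0 : (0 < d)%N by apply: leq_trans hd.
have jE : j = (j - 1).+1 by rewrite subn1 prednK // (leq_trans d_gt0 hdj).
have deg_bound : (2 * (j - 1) < 3 * (d - 1))%N by move: hj; rewrite geq_half_double; lia.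
rewrite jE in hlam.
split; first by have [C expC] := exists_orbsum_expansion K (Ordinal d_gt0) hlam hmu; exists C.
move=> C expC; split; last by rewrite /s /p3 (perm_size hmu).
exact (orbsum_expansion_rank (Ordinal d_gt0) hlam hmu (Emap_sym_onto hchar deg_bound) expC).
Qed.
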